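(* Let $T$ be a transformer over $\Sigma$ (fixed precision, no positional encoding, soft attention, strict future masking, with layer normalization) as defined in the context. Then each of the maps $\bar w\mapsto H^{(\ell)}(\bar w)$, $\ell\in\{0,0.5,1,\dots,L\}$, and the output map $\bar w\mapsto o(\bar w)$ is simulated by $\mathbf{PFO}^2$ over $\bar\Sigma$. In particular, the language recognized by $T$ equals $\{w\in\Sigma^*:\bar w\models\sigma\}$ for some $\mathbf{PFO}^2$ sentence $\sigma$ over $\bar\Sigma$.
   Context: Fixed precision: $\mathbb{F}$ is a fixed finite set of floating-point values containing $0,1,-1,\infty,-\infty$; every arithmetic operation used below ($+,\cdot,/,\sqrt{\cdot},\exp,\mathrm{ReLU}$, finite sums, layer normalization) returns a value in $\mathbb{F}$, with conventions $\infty+f=\infty$, $-\infty+f=-\infty$ for $f\ne\mp\infty$; $f\cdot(\pm\infty)=\pm\infty$ for $f>0$ and $=\mp\infty$ for $f<0$; $f/\infty=0$ for finite $f$; $\exp(\infty)=\infty$, $\exp(-\infty)=0$. Under fixed precision the weights $\alpha_{n,\cdot}$ produced by softmax at any position have at most $N_{\max}=\lfloor \min(1,\max(\mathbb{F}\setminus\{\infty\}))/\min(\mathbb{F}_{>0})\rfloor$ nonzero entries, and a sum of nonnegative elements of $\mathbb{F}$ is determined by how many summands take each value, counted up to a fixed threshold. Given a finite alphabet $\Sigma$ and fresh symbol $\mathrm{EOS}\notin\Sigma$, put $\bar\Sigma=\Sigma\cup\{\mathrm{EOS}\}$ and for $w=w_1\cdots w_N\in\Sigma^*$ let $\bar w=w_1\cdots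 w_Nw_{N+1}$ with $w_{N+1}=\mathrm{EOS}$. A transformer of width $D$ and depth $L$ (all parameters with entries in $\mathbb{F}$) maps $\bar w$ to matrices $H^{(\ell)}(\bar w)\in\mathbb{F}^{D\times(N+1)}$, $\ell\in\{0,0.5,1,\dots,L\}$: $H^{(0)}_{:,n}=e(w_n)$ for an embedding $e:\bar\Sigma\to\mathbb{F}^D$; for $\ell=0,\dots,L-1$, $H^{(\ell+0.5)}=\mathrm{LN}(A^{(\ell)}(H^{(\ell)})+H^{(\ell)})$ and $H^{(\ell+1)}=\mathrm{LN}(F^{(\ell)}(H^{(\ell+0.5)})+H^{(\ell+0.5)})$, where $\mathrm{LN}$ is columnwise layer normalization, $F^{(\ell)}(H)_{:,n}=W^{F2}\mathrm{ReLU}(W^{F1}H_{:,n}+b^{F1})+b^{F2}$, and the single-head soft attention is $Q=W^QH$, $K=W^KH$, $V=W^VH$, $S_{n,m}=Q_{:,n}\cdot K_{:,m}/\sqrt D$, $\alpha_{n,m}=\exp(S_{n,m})/\sum_{i<n}\exp(S_{n,i})$, $A(H)_{:,n}=\sum_{m<n}\alpha_{n,m}V_{:,m}$ (strict future masking). The output is $o(\bar w)=\theta^\top H^{(L)}_{:,N+1}+b$; $w$ is accepted iff $o(\bar w)>0$, and the recognized language is the set of accepted strings. $\mathbf{PFO}^2$ over an alphabet $\Gamma$: formulas in the two variables $x,y$ (re-quantifiable), atomic formulas $\pi_a(z)$ ($a\in\Gamma$) and $z<z'$, closed under $\wedge,\neg$, $\exists y<x:\phi(x,y)$, $\exists x<y:\phi(x,y)$,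 and, for $\phi(x)$ with only free variable $x$, $\exists x<y:\phi(x)$ and $\exists x:\phi(x)$ (and symmetrically in $x,y$); standard semantics over positions of a string; a sentence $\sigma$ has no free variables. A map $G$ assigning to every $\bar w$ ($w\in\Sigma^*$ of any length $N$) a matrix $G(\bar w)\in\mathbb{F}^{D\times(N+1)}$ is simulated by $\mathbf{PFO}^2$ if for every $d\in\{1,\dots,D\}$ and $f\in\mathbb{F}$ there is a $\mathbf{PFO}^2$ formula $\phi(x)$ over $\bar\Sigma$ with one free variable such that for all $w$ and all $n\in\{1,\dots,N+1\}$: $G_{d,n}(\bar w)=f$ iff $\bar w,n\models\phi(x)$ (for a scalar output $o(\bar w)$, take $n=N+1$). *)

From mathcomp Require Import all_boot.

Set Implicit Arguments.
Unset Strict Implicit.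
Unset Printing Implicit Defensive.

(* A finite set of floating-point values with distinguished elements
   0, 1, -1, +oo, -oo, an order, and the arithmetic operations used by the
   transformer, each returning a value of F.  [fsum] is the (fixed-precision)
   finite sum, [fofnat D] the value of the integer D in F (used for sqrt D),
   [fln D] columnwise layer normalization of a width-D column. *)
Record fpmodel := FPModel {
  fpT :> finType;
  f0 : fpT; f1 : fpT; fm1 : fpT; fpinf : fpT; fninf : fpT;
  flt : rel fpT;
  fadd : fpT -> fpT -> fpT;
  fmul : fpT -> fpT -> fpT;
  fdiv : fpT -> fpT -> fpT;
  fsqrt : fpT -> fpT;
  fexp : fpT -> fpT;
  frelu : fpT -> fpT;
  fsum : seq fpT -> fpT;
  fofnat : nat -> fpT;
  fln : forall D : nat, ('I_D -> fpT) -> 'I_D -> fpT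
}.

Definition fnonneg (M : fpmodel) (v : M) : bool := ~~ flt v (f0 M).
Definition ffinite (M : fpmodel) (v : M) : bool := (v != fpinf M) && (v != fninf M).

Definition fp_axioms (M : fpmodel) : Prop :=
  [/\ (forall a : M, ~~ flt a a),
      (forall a b c : M, flt a b -> flt b c -> flt a c),
      (forall a b : M, [|| flt a b, a == b | flt b a]),
      (forall a, a != fninf M -> flt (fninf M) a) &
      (forall a, a != fpinf M -> flt a (fpinf M)) /\
      flt (fm1 M) (f0 M) /\ flt (f0 M) (f1 M)]
  /\
  [/\ (forall f, f != fninf M -> fadd (fpinf M) f = fpinf M),
      (forall f, f != fpinf M -> fadd (fninf M) f = fninf M),
      (forall f, flt (f0 M) f ->
          fmul f (fpinf M) = fpinf M /\ fmul f (fninf M) = fninf M) /\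
      (forall f, flt f (f0 M) ->
          fmul f (fpinf M) = fninf M /\ fmul f (fninf M) = fpinf M),
      (forall f, ffinite f -> fdiv f (fpinf M) = f0 M) /\
      fexp (fpinf M) = fpinf M /\ fexp (fninf M) = f0 M &
      (forall f, frelu f = if flt (f0 M) f then f else f0 M)]
  /\
  [/\ (forall f : M, fnonneg (fexp f)),
      (forall f, fmul (f0 M) f = f0 M),
      (forall s, fsum s = fsum [seq v <- s | v != f0 M]),
      (exists K : nat, forall s t : seq M,
          all (@fnonneg M) s -> all (@fnonneg M) t ->
          (forall v, minn (count_mem v s) K = minn (count_mem v t) K) ->
          fsum s = fsum t) &
      (exists N : nat, forall s : seq M,
          count (fun v => fdiv (fexp v) (fsum (map (@fexp M) s)) != f0 M) s
            <= N)].

(* bar Sigma = option Sigma, with None = EOS. *)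
Definition wbar (Sig : Type) (w : seq Sig) : seq (option Sig) :=
  rcons (map Some w) None.

(* Layer-indexed parameters are functions of the layer index l (only
   l < L is used).  Dk = dimension of queries/keys, Dh l = hidden width of
   the feed-forward sublayer of layer l. *)
Record transformer (M : fpmodel) (Sig : finType) (D L : nat) := Transformer {
  emb : option Sig -> 'I_D -> M;
  Dk : nat;
  WQ : nat -> 'I_Dk -> 'I_D -> M;
  WK : nat -> 'I_Dk -> 'I_D -> M;
  WV : nat -> 'I_D -> 'I_D -> M;
  Dh : nat -> nat;
  WF1 : forall l, 'I_(Dh l) -> 'I_D -> M;
  bF1 : forall l, 'I_(Dh l) -> M;
  WF2 : forall l, 'I_D -> 'I_(Dh l) -> M;
  bF2 : nat -> 'I_D -> M;
  theta : 'I_D -> M;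
  bout : M
}.
Arguments WQ {M Sig D L} t _ _ _.
Arguments WK {M Sig D L} t _ _ _.
Arguments WV {M Sig D L} t _ _ _.
Arguments Dh {M Sig D L} t _.
Arguments WF1 {M Sig D L} t _ _ _.
Arguments bF1 {M Sig D L} t _ _.
Arguments WF2 {M Sig D L} t _ _ _.
Arguments Dk {M Sig D L} t.

Section Transformer.
Variables (M : fpmodel) (Sig : finType) (D L : nat) (T : transformer M Sig D L).

(* A matrix in F^{D x (N+1)} is represented by its columns n = 1..N+1. *)
Definition cols := nat -> 'I_D -> M.

Definition matvec (m k : nat) (W : 'I_m -> 'I_k -> M) (h : 'I_k -> M)
  : 'I_m -> M :=
  fun i => fsum [seq fmul (W i j) (h j) | j <- enum 'I_k].

Definition attn (l : nat) (H : cols) : cols :=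
  let Q n := matvec (WQ T l) (H n) in
  let K n := matvec (WK T l) (H n) in
  let V n := matvec (WV T l) (H n) in
  let S n m := fdiv (fsum [seq fmul (Q n i) (K m i) | i <- enum 'I_(Dk T)])
                    (fsqrt (fofnat M D)) in
  let alpha n m := fdiv (fexp (S n m))
                        (fsum [seq fexp (S n i) | i <- iota 1 n.-1]) in
  fun n d => fsum [seq fmul (alpha n m) (V m d) | m <- iota 1 n.-1].

Definition ffn (l : nat) (H : cols) : cols :=
  fun n d =>
    fadd (fsum [seq fmul (WF2 T l d j)
                 (frelu (fadd (matvec (WF1 T l) (H n) j) (bF1 T l j)))
               | j <- enum 'I_(Dh T l)])
         (bF2 T l d).

Definition resLN (G H : cols) : cols :=
  fun n => fln (fun d => fadd (G n d) (H n d)).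

(* hidden states H^(k/2) (x), k = 0, 1, ..., 2L : step k+1 is the attention
   sublayer of layer k/2 when k is even, its feed-forward sublayer when odd. *)
Fixpoint hstate (k : nat) (x : seq (option Sig)) : cols :=
  match k with
  | 0 => fun n d => emb T (nth None x n.-1) d
  | k'.+1 =>
      let H := hstate k' x in
      if odd k' then resLN (ffn k'./2 H) H else resLN (attn k'./2 H) H
  end.

Definition output (x : seq (option Sig)) : M :=
  fadd (fsum [seq fmul (theta T d) (hstate (2 * L) x (size x) d)
             | d <- enum 'I_D])
       (bout T).

Definition accepts (w : seq Sig) : bool := flt (f0 M) (output (wbar w)).

End Transformer.

Inductive var := vx | vy.

Definition other (v : var) : var := if v is vx then vy else vx.
Definition var_eqb (a b : var) : bool :=
  match a, b with vx, vx | vy, vy => true | _, _ => false end.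

Inductive pfo (A : Type) :=
  | PPi of A & var
  | PLt of var & var
  | PAnd of pfo A & pfo A
  | PNot of pfo A
  | PExLt of var & pfo A            (* exists b < other b : phi *)
  | PEx of var & pfo A.

Arguments PLt {A}.

Fixpoint free (A : Type) (phi : pfo A) (v : var) : bool :=
  match phi with
  | PPi _ z => var_eqb v z
  | PLt z z' => var_eqb v z || var_eqb v z'
  | PAnd p q => free p v || free q v
  | PNot p => free p v
  | PExLt b p => var_eqb v (other b) || (~~ var_eqb v b && free p v)
  | PEx b p => ~~ var_eqb v b && free p v
  end.

(* well-formed PFO^2 formulas: unbounded exists only over formulas whose
   only free variable is the quantified one *)
Fixpoint wf (A : Type) (phi : pfo A) : bool :=
  match phi with
  | PPi _ _ | PLt _ _ => true
  | PAnd p q => wf p && wf q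
  | PNot p => wf p
  | PExLt _ p => wf p
  | PEx b p => wf p && ~~ free p (other b)
  end.

Definition upd (e : var -> nat) (b : var) (p : nat) : var -> nat :=
  fun v => if var_eqb v b then p else e v.

(* semantics over positions 1..size x of the string x *)
Fixpoint sat (A : eqType) (x : seq A) (e : var -> nat) (phi : pfo A) : Prop :=
  match phi with
  | PPi a z => 1 <= e z <= size x /\ nth a x (e z).-1 = a
  | PLt z z' => e z < e z'
  | PAnd p q => sat x e p /\ sat x e q
  | PNot p => ~ sat x e p
  | PExLt b p => exists2 i, 1 <= i < e (other b) & sat x (upd e b i) p
  | PEx b p => exists2 i, 1 <= i <= size x & sat x (upd e b i) p
  end.

Definition formula1 (A : Type) (phi : pfo A) : Prop :=
  wf phi /\ ~~ free phi vy.
Definition sentence (A : Type) (phi : pfo A) : Prop :=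
  wf phi /\ ~~ free phi vx /\ ~~ free phi vy.

Definition sat1 (A : eqType) (x : seq A) (n : nat) (phi : pfo A) : Prop :=
  sat x (fun _ => n) phi.
Definition satS (A : eqType) (x : seq A) (phi : pfo A) : Prop :=
  sat x (fun _ => 1) phi.

Definition simulated (M : fpmodel) (Sig : finType) (D : nat)
    (G : seq (option Sig) -> nat -> 'I_D -> M) : Prop :=
  forall (d : 'I_D) (f : M), exists phi : pfo (option Sig),
    formula1 phi /\
    forall (w : seq Sig) (n : nat), 1 <= n <= size w + 1 ->
      (G (wbar w) n d = f <-> sat1 (wbar w) n phi).

Definition simulated_scalar (M : fpmodel) (Sig : finType)
    (o : seq (option Sig) -> M) : Prop :=
  forall f : M, exists phi : pfo (option Sig),
    formula1 phi /\
    forall w : seq Sig, (o (wbar w) = f <-> sat1 (wbar w) (size w + 1) phi).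

(* Every hidden column lies in the finite set F^D, so it suffices to show that each
   column map n |-> H_{:,n} is definable: for every value c, the positions where the
   column equals c are defined by a PFO^2 formula.  Embedding, feed-forward sublayer,
   residual connection and layer normalization act column by column, so definability
   passes through them by a case distinction over finitely many values.  The attention
   column at n is determined by the column at n, the softmax denominator and the ordered
   list of columns of nonzero weight.  The denominator is a sum of nonnegative values,
   hence determined by how many earlier positions produce each value, counted up to a
   threshold; "at least j earlier positions satisfy phi" is expressed by nesting j strict
   past quantifiers.  The nonzero-weight list has bounded length and is defined by
   induction on its length, locating its last entry by a past quantifier and a count.
   Acceptance is the sentence "at the EOS position the output is positive". *)

From mathcomp Require Import all_boot.
From mathcomp Require Import zify.
From Stdlib Require Import Classical FunctionalExtensionality.

Set Implicit Arguments.
Unset Strict Implicit.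
Unset Printing Implicit Defensive.

Lemma var_eqb_refl (v : var) : var_eqb v v.
Proof. by case: v. Qed.

Lemma var_eqb_other (a b : var) : var_eqb (other a) (other b) = var_eqb a b.
Proof. by case: a; case: b. Qed.

Lemma other_involutive : involutive other.
Proof. by case. Qed.

Lemma upd_agree (P : pred var) (e1 e2 : var -> nat) b i :
  (forall v, ~~ var_eqb v b -> P v -> e1 v = e2 v) ->
  forall v, P v -> upd e1 b i v = upd e2 b i v.
Proof. by move=> He v Hv; rewrite /upd; case: ifP => // /negbT /He; apply. Qed.

Section Semantics.
Variables (A : eqType) (x : seq A).

Lemma sat_free_ext (phi : pfo A) (e1 e2 : var -> nat) :
  (forall v, free phi v -> e1 v = e2 v) -> sat x e1 phi <-> sat x e2 phi.
Proof.
elim: phi e1 e2 => [a z|z z'|p IHp q IHq|p IHp|b p IHp|b p IHp] e1 e2 He /=.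
- by rewrite He //= var_eqb_refl.
- by rewrite !He //= var_eqb_refl ?orbT.
- by rewrite (IHp e1 e2) ?(IHq e1 e2) // => v Hv; apply: He; rewrite /= Hv ?orbT.
- by rewrite (IHp e1 e2).
- rewrite He /= ?var_eqb_refl //.
  have Hu i v : free p v -> upd e1 b i v = upd e2 b i v.
    by apply: upd_agree => {}v Hb Hv; apply: He; rewrite /= Hb Hv orbT.
  by split=> -[i Hi Hs]; exists i => //; move: Hs; apply IHp => v /(Hu i) ->.
- have Hu i v : free p v -> upd e1 b i v = upd e2 b i v.
    by apply: upd_agree => {}v Hb Hv; apply: He; rewrite /= Hb Hv.
  by split=> -[i Hi Hs]; exists i => //; move: Hs; apply IHp => v /(Hu i) ->.
Qed.

Fixpoint swap_vars (phi : pfo A) : pfo A :=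
  match phi with
  | PPi a z => PPi a (other z)
  | PLt z z' => PLt (other z) (other z')
  | PAnd p q => PAnd (swap_vars p) (swap_vars q)
  | PNot p => PNot (swap_vars p)
  | PExLt b p => PExLt (other b) (swap_vars p)
  | PEx b p => PEx (other b) (swap_vars p)
  end.

Lemma free_swap_vars (phi : pfo A) v : free (swap_vars phi) v = free phi (other v).
Proof.
elim: phi v => [a z|z z'|p IHp q IHq|p IHp|b p IHp|b p IHp] v /=;
  rewrite ?IHp ?IHq //.
all: by case: v; case: z || case: b; try case: z'.
Qed.

Lemma wf_swap_vars (phi : pfo A) : wf (swap_vars phi) = wf phi.
Proof.
elim: phi => [a z|z z'|p IHp q IHq|p IHp|b p IHp|b p IHp] //=; rewrite ?IHp ?IHq //.
by rewrite free_swap_vars other_involutive.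
Qed.

Lemma sat_swap_vars (phi : pfo A) (e e' : var -> nat) :
  (forall v, e' v = e (other v)) -> sat x e (swap_vars phi) <-> sat x e' phi.
Proof.
elim: phi e e' => [a z|z z'|p IHp q IHq|p IHp|b p IHp|b p IHp] e e' He /=.
- by rewrite He.
- by rewrite !He.
- by rewrite (IHp e e') ?(IHq e e').
- by rewrite (IHp e e').
- have Hu i v : upd e' b i v = upd e (other b) i (other v).
    by rewrite /upd var_eqb_other He.
  by rewrite He other_involutive; split=> -[i Hi Hs]; exists i => //; move: Hs;
    rewrite (IHp _ (upd e' b i) (Hu i)).
- have Hu i v : upd e' b i v = upd e (other b) i (other v).
    by rewrite /upd var_eqb_other He.
  by split=> -[i Hi Hs]; exists i => //; move: Hs; rewrite (IHp _ (upd e' b i) (Hu i)).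
Qed.

Lemma sat_formula1 (phi : pfo A) (e : var -> nat) :
  ~~ free phi vy -> sat x e phi <-> sat1 x (e vx) phi.
Proof. by move=> Hy; apply: sat_free_ext => -[] // Hv; rewrite Hv in Hy. Qed.

Definition PExBefore (phi : pfo A) : pfo A := PExLt vy (swap_vars phi).

Lemma formula1_PExBefore (phi : pfo A) : formula1 phi -> formula1 (PExBefore phi).
Proof. by case=> Hw Hy; split; rewrite /= ?wf_swap_vars // free_swap_vars. Qed.

Lemma sat1_PExBefore (phi : pfo A) n : ~~ free phi vy ->
  sat1 x n (PExBefore phi) <-> exists2 i, 0 < i < n & sat1 x i phi.
Proof.
move=> Hy; rewrite /sat1 /=.
have E i : sat x (upd (fun=> n) vy i) (swap_vars phi) <-> sat1 x i phi.
  by rewrite (sat_swap_vars _ (e' := upd (fun=> n) vy i \o other)) ?sat_formula1 //;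
    case.
by split=> -[i Hi Hs]; exists i => //; move: Hs; rewrite E.
Qed.

End Semantics.

Lemma iota1S k : iota 1 k.+1 = rcons (iota 1 k) k.+1.
Proof. by rewrite -cats1 -(iotaD 1 k 1) addn1. Qed.

Lemma count_iota1S (p : pred nat) k :
  count p (iota 1 k.+1) = count p (iota 1 k) + p k.+1.
Proof. by rewrite iota1S -cats1 count_cat /= addn0. Qed.

Lemma count_iota_gt (p : pred nat) j k :
  (j < count p (iota 1 k)) = has (fun i => p i && (j <= count p (iota 1 i.-1))) (iota 1 k).
Proof.
elim: k => [|k IH] //; rewrite count_iota1S iota1S has_rcons -IH /=.
by case: (p k.+1); rewrite /= ?addn0 ?addn1 ?orbF // ltnS orb_idr // => /ltnW.
Qed.

Section FilterIota.
Variables (C : Type) (p : pred nat) (f : nat -> C).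
Local Notation F k := [seq f m | m <- iota 1 k & p m].

Lemma size_filter_iota k : size (F k) = count p (iota 1 k).
Proof. by rewrite size_map size_filter. Qed.

Lemma filter_iota1S k : F k.+1 = if p k.+1 then rcons (F k) (f k.+1) else F k.
Proof. by rewrite iota1S filter_rcons; case: (p k.+1); rewrite ?map_rcons. Qed.

Lemma filter_iota_stable a b :
  a <= b -> count p (iota 1 a) = count p (iota 1 b) -> F a = F b.
Proof.
move=> Hab; rewrite -(subnKC Hab) iotaD count_cat filter_cat map_cat.
move=> /eqP; rewrite -{1}[count p _]addn0 eqn_add2l eq_sym -size_filter => /eqP.
by move/size0nil ->; rewrite cats0.
Qed.

Lemma filter_iota_eq_rcons k s c :
  F k = rcons s c <->
  count p (iota 1 k) = (size s).+1 /\
  exists2 m, 0 < m <= k & [/\ p m, f m = c & F m.-1 = s].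
Proof.
split.
  elim: k => [|k IH]; first by move/(congr1 size); rewrite size_rcons.
  rewrite filter_iota1S count_iota1S; case: ifP => pk.
    move=> E; have [Es Ec] := rcons_inj E; rewrite -size_filter_iota Es addn1.
    by split=> //; exists k.+1; rewrite ?leqnn //; split.
  by move/IH => [cnt [m /andP [m0 mk] Hm]]; rewrite addn0; split=> //; exists m;
    rewrite ?m0 ?(leqW mk).
move=> [cnt [[//|m] /andP [_ mk] [pm fm Fm]]].
have Em : F m.+1 = rcons s c by rewrite filter_iota1S pm Fm fm.
by rewrite -(filter_iota_stable mk) // -size_filter_iota Em size_rcons cnt.
Qed.

End FilterIota.

Lemma size_wbar (Sig : Type) (w : seq Sig) : size (wbar w) = size w + 1.
Proof. by rewrite size_rcons size_map addn1. Qed.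

Lemma nth_wbar_eq_None (Sig : eqType) (w : seq Sig) j :
  j < size w + 1 -> nth None (wbar w) j = None <-> j = size w.
Proof.
rewrite nth_rcons size_map addn1 ltnS leq_eqVlt => /orP [/eqP ->|Hj].
  by rewrite ltnn eqxx.
rewrite Hj; have : nth None (map Some w) j \in map Some w by rewrite mem_nth ?size_map.
by case/mapP => y _ ->; split=> // E; rewrite E ltnn in Hj.
Qed.

Section Definability.
Variable Sig : finType.
Notation word := (seq (option Sig)).

Definition definable (P : word -> nat -> Prop) : Prop :=
  exists phi : pfo (option Sig), formula1 phi /\
    forall w n, 0 < n <= size w + 1 -> (P (wbar w) n <-> sat1 (wbar w) n phi).

Definition definable_map (K : eqType) (G : word -> nat -> K) : Prop :=
  forall c, definable (fun x n => G x n = c).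

Lemma definable_iff (P Q : word -> nat -> Prop) : definable P ->
  (forall w n, 0 < n <= size w + 1 -> P (wbar w) n <-> Q (wbar w) n) -> definable Q.
Proof. by move=> [phi [Hphi HP]] HPQ; exists phi; split=> // w n Hn; rewrite -HPQ // HP. Qed.

Lemma definable_and (P Q : word -> nat -> Prop) :
  definable P -> definable Q -> definable (fun x n => P x n /\ Q x n).
Proof.
move=> [p [[wp fp] Hp]] [q [[wq fq] Hq]]; exists (PAnd p q).
split; first by split; rewrite /= ?wp ?wq // negb_or fp fq.
by move=> w n Hn; rewrite Hp ?Hq.
Qed.

Lemma definable_not (P : word -> nat -> Prop) :
  definable P -> definable (fun x n => ~ P x n).
Proof. by move=> [p [Hp HP]]; exists (PNot p); split=> // w n Hn; rewrite HP. Qed.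

Lemma definable_const (Q : Prop) : definable (fun _ _ => Q).
Proof.
have Hfalse : definable (fun _ _ => False).
  by exists (PLt vx vx); split=> // w n _; rewrite /sat1 /= ltnn.
case: (classic Q) => HQ; last by apply: definable_iff Hfalse _.
by apply: definable_iff (definable_not Hfalse) _ => w n _; tauto.
Qed.

Lemma definable_or (P Q : word -> nat -> Prop) :
  definable P -> definable Q -> definable (fun x n => P x n \/ Q x n).
Proof.
move=> HP HQ; apply: definable_iff
  (definable_not (definable_and (definable_not HP) (definable_not HQ))) _.
by move=> w n _; tauto.
Qed.

Lemma definable_exists_in (I : eqType) (s : seq I) (P : I -> word -> nat -> Prop) :
  (forall t, definable (P t)) -> definable (fun x n => exists2 t, t \in s & P t x n).
Proof.
move=> HP; elim: s => [|t s IH].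
  by apply: definable_iff (definable_const False) _ => w n _; split=> // -[].
apply: definable_iff (definable_or (HP t) IH) _ => w n _; split.
  by case=> [|[u Hu]]; [exists t; rewrite ?mem_head | exists u; rewrite ?inE ?Hu ?orbT].
by case=> u; rewrite inE => /orP [/eqP ->|Hu]; [left | right; exists u].
Qed.

Lemma definable_exists (I : finType) (P : I -> word -> nat -> Prop) :
  (forall t, definable (P t)) -> definable (fun x n => exists t, P t x n).
Proof.
move=> HP; apply: definable_iff (definable_exists_in (enum I) HP) _ => w n _.
by split=> -[t]; [exists t | exists t; rewrite ?mem_enum].
Qed.

Lemma definable_forall (I : finType) (P : I -> word -> nat -> Prop) :
  (forall t, definable (P t)) -> definable (fun x n => forall t, P t x n).
Proof.
move=> HP; apply: definable_iff
  (definable_not (definable_exists (fun t => definable_not (HP t)))) _ => w n _.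
by split=> [/not_ex_not_all | H [t]] //; apply.
Qed.

Lemma definable_before (P : word -> nat -> Prop) :
  definable P -> definable (fun x n => exists2 i, 0 < i < n & P x i).
Proof.
move=> [p [Hp HP]]; exists (PExBefore p); split; first exact: formula1_PExBefore.
move=> w n /andP [_ Hn]; rewrite sat1_PExBefore; last by case: Hp.
have Hrange i : 0 < i < n -> 0 < i <= size w + 1.
  by case/andP=> -> Hi; exact: leq_trans (ltnW Hi) Hn.
by split=> -[i Hi HPi]; exists i => //; move: HPi; rewrite HP ?(Hrange i Hi).
Qed.

Lemma definable_map_letter : definable_map (fun x n => nth None x n.-1).
Proof.
move=> a.
exists (PPi a vx); split=> // w n /andP [Hn1 Hn2]; rewrite /sat1 /= size_wbar Hn1 Hn2.
rewrite (set_nth_default None) ?size_wbar; last by case: n Hn1 Hn2.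
by split=> [|[]].
Qed.

Lemma definable_pred_in (K : eqType) (s : seq K) (G : word -> nat -> K) (P : K -> Prop) :
  definable_map G -> definable (fun x n => G x n \in s /\ P (G x n)).
Proof.
move=> HG; have HP c := definable_and (HG c) (definable_const (P c)).
apply: definable_iff (definable_exists_in s HP) _ => w n _.
by split=> [[c Hc [-> HPc]] | [Hs HPc]]; [|exists (G (wbar w) n)].
Qed.

Lemma definable_pred (K : finType) (G : word -> nat -> K) (P : K -> Prop) :
  definable_map G -> definable (fun x n => P (G x n)).
Proof.
move=> HG; apply: definable_iff (definable_pred_in (enum K) P HG) _ => w n _.
by rewrite mem_enum; split=> [[]|].
Qed.

Lemma definable_map_comp (K : finType) (K' : eqType) (g : K -> K') (G : word -> nat -> K) :
  definable_map G -> definable_map (fun x n => g (G x n)).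
Proof. by move=> HG c; apply: (definable_pred (fun k => g k = c) HG). Qed.

Lemma definable_map_pair (K1 K2 : eqType) (G1 : word -> nat -> K1) (G2 : word -> nat -> K2) :
  definable_map G1 -> definable_map G2 -> definable_map (fun x n => (G1 x n, G2 x n)).
Proof.
move=> H1 H2 [a b]; apply: definable_iff (definable_and (H1 a) (H2 b)) _ => w n _.
by split=> [[-> ->] | [-> ->]].
Qed.

Lemma definable_map_ffun (I : finType) (K : eqType) (G : I -> word -> nat -> K) :
  (forall t, definable_map (G t)) -> definable_map (fun x n => [ffun t => G t x n]).
Proof.
move=> HG f; apply: definable_iff (definable_forall (fun t => HG t (f t))) _ => w n _.
by split=> [H | <- t]; [apply/ffunP => t; rewrite ffunE | rewrite ffunE].
Qed.

Lemma definable_map_bind (K1 : finType) (K2 : eqType)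
    (G : word -> nat -> K1) (J : K1 -> word -> nat -> K2) :
  definable_map G -> (forall c, definable_map (J c)) ->
  definable_map (fun x n => J (G x n) x n).
Proof.
move=> HG HJ v; have HP c := definable_and (HG c) (HJ c v).
apply: definable_iff (definable_exists HP) _ => w n _.
by split=> [[c [-> ->]] | <-]; last exists (G (wbar w) n).
Qed.

Lemma definable_map_factor (K : finType) (K' : eqType)
    (V : word -> nat -> K) (F : word -> nat -> K') :
  definable_map V -> (forall x n x' n', V x n = V x' n' -> F x n = F x' n') ->
  definable_map F.
Proof.
move=> HV HF v.
pose Q t := exists x' n', V x' n' = t /\ F x' n' = v.
apply: definable_iff (definable_pred Q HV) _ => w n _; split.
  by move=> [x' [n' [Ex Ev]]]; rewrite -Ev; apply: HF; rewrite Ex.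
by move=> Ev; exists (wbar w), n.
Qed.

Lemma definable_map_ext (K : eqType) (G1 G2 : word -> nat -> K) :
  (forall x n, G1 x n = G2 x n) -> definable_map G1 -> definable_map G2.
Proof. by move=> E HG c; apply: definable_iff (HG c) _ => w n _; rewrite E. Qed.

Lemma definable_map_comp2 (K1 K2 : finType) (K' : eqType) (g : K1 -> K2 -> K')
    (G1 : word -> nat -> K1) (G2 : word -> nat -> K2) :
  definable_map G1 -> definable_map G2 -> definable_map (fun x n => g (G1 x n) (G2 x n)).
Proof.
by move=> H1 H2; apply: (definable_map_comp (fun p => g p.1 p.2) (definable_map_pair H1 H2)).
Qed.

Section Counting.
Variable P : word -> nat -> bool.
Hypothesis HP : definable (fun x n => P x n).

Lemma definable_count_ge j : definable (fun x n => j <= count (P x) (iota 1 n.-1)).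
Proof.
elim: j => [|j IH]; first exact: definable_iff (definable_const True) _.
apply: definable_iff (definable_before (definable_and HP IH)) _ => w n /andP [n0 _].
rewrite count_iota_gt; split.
  by move=> [i Hi [Pi Hj]]; apply/hasP; exists i; rewrite ?Pi // mem_iota; case: n n0 Hi.
by move=> /hasP [i]; rewrite mem_iota => Hi /andP [Pi Hj]; exists i => //; case: n n0 Hi.
Qed.

Lemma definable_count_eq j : definable (fun x n => count (P x) (iota 1 n.-1) = j).
Proof.
apply: definable_iff (definable_and (definable_count_ge j)
  (definable_not (definable_count_ge j.+1))) _ => w n _.
by split=> [[]|->]; [lia | rewrite leqnn ltnn].
Qed.

Definition capped_count (j : nat) (x : word) (n : nat) : 'I_j.+1 :=
  inord (minn (count (P x) (iota 1 n.-1)) j).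

Lemma definable_map_capped_count j : definable_map (capped_count j).
Proof.
move=> c; have c_le_j : c <= j := ltn_ord c.
apply: definable_iff (definable_or
  (definable_and (definable_const (c = j :> nat)) (definable_count_ge j))
  (definable_and (definable_const (c < j)) (definable_count_eq c))) _ => w n _.
rewrite (rwP eqP) -(inj_eq val_inj) /= inordK ?ltnS ?geq_minr // -(rwP eqP).
by split=> [[[-> Hj]|[Hc Hk]] | Hk]; lia.
Qed.

End Counting.

Lemma definable_map_filter (C : finType) (G : word -> nat -> C) (Z : pred C) :
  definable_map G -> definable_map (fun x n => [seq G x m | m <- iota 1 n.-1 & Z (G x m)]).
Proof.
move=> HG; have HZ := definable_pred Z HG; elim/last_ind => [|s c IH].
  apply: definable_iff (definable_count_eq HZ 0) _ => w n _.
  by rewrite -(size_filter_iota _ (G (wbar w))); split=> [/size0nil|->].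
have Hlast := definable_before (definable_and (HG c)
  (definable_and (definable_const (Z c)) IH)).
apply: definable_iff (definable_and (definable_count_eq HZ (size s).+1) Hlast) _.
move=> w n /andP [n0 _]; rewrite filter_iota_eq_rcons.
have Hrange m : (0 < m < n) = (0 < m <= n.-1) by case: n n0.
split=> -[cnt [m Hm Hfm]]; split=> //; exists m; rewrite ?Hrange // in Hm *.
  by case: Hfm => <- [Zc <-].
by case: Hfm => Zm <- <-.
Qed.

Lemma definable_at_end (P : word -> nat -> Prop) : definable P ->
  exists sigma, sentence sigma /\ forall w, P (wbar w) (size w + 1) <-> satS (wbar w) sigma.
Proof.
move=> [phi [[wphi yphi] HP]]; exists (PEx vx (PAnd (PPi None vx) phi)).
split; first by rewrite /sentence /= wphi yphi.
move=> w; rewrite /satS /= size_wbar HP; last by rewrite addn1 /=.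
have Hphi i : sat (wbar w) (upd (fun=> 1) vx i) phi <-> sat1 (wbar w) i phi.
  exact: sat_formula1.
rewrite /upd /=; split=> [Hs | [i /andP [i0 iw] [[_ Hi] /Hphi Hs]]].
  exists (size w + 1); first by rewrite addn1 /=.
  by split; [rewrite addn1 /= nth_wbar_eq_None ?addn1 | apply/Hphi].
move: Hi Hs; rewrite nth_wbar_eq_None; last by case: i i0 iw => // i _; rewrite addn1.
by case: i i0 iw => // i _ _ /= ->; rewrite addn1.
Qed.

End Definability.

Section Columns.
Variables (M : fpmodel) (Sig : finType) (D L : nat) (T : transformer M Sig D L).
Local Notation column := {ffun 'I_D -> M}.

Definition col (H : nat -> 'I_D -> M) (n : nat) : column := [ffun d => H n d].

Lemma matvec_ffun m (W : 'I_m -> 'I_D -> M) (h : 'I_D -> M) i :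
  matvec W [ffun d => h d] i = matvec W h i.
Proof. by congr fsum; apply: eq_map => j; rewrite ffunE. Qed.

Definition resLN_col (a b : column) : column :=
  [ffun d => fln (fun d' => fadd (a d') (b d')) d].

Lemma col_resLN (G H : nat -> 'I_D -> M) n :
  col (resLN G H) n = resLN_col (col G n) (col H n).
Proof.
apply/ffunP => d; rewrite !ffunE; congr fln.
by apply: functional_extensionality => d'; rewrite !ffunE.
Qed.

Definition ffn_col (l : nat) (c : column) : column := [ffun d => ffn T l (fun _ => c) 0 d].

Lemma col_ffn l (H : nat -> 'I_D -> M) n : col (ffn T l H) n = ffn_col l (col H n).
Proof.
apply/ffunP => d; rewrite !ffunE; congr fadd; congr fsum.
by apply: eq_map => j; rewrite matvec_ffun.
Qed.

Section Attention.
Variable l : nat.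

Definition score (u c : column) : M :=
  fdiv (fsum [seq fmul (matvec (WQ T l) u i) (matvec (WK T l) c i) | i <- enum 'I_(Dk T)])
       (fsqrt (fofnat M D)).

Definition softmax_denom (G : nat -> column) (n : nat) : M :=
  fsum [seq fexp (score (G n) (G i)) | i <- iota 1 n.-1].

(* Only these columns contribute to the fixed-precision attention sum. *)
Definition attended (u : column) (z : M) (G : nat -> column) (n : nat) : seq column :=
  [seq G m | m <- iota 1 n.-1 & fdiv (fexp (score u (G m))) z != f0 M].

Definition attn_combine (u : column) (z : M) (s : seq column) : column :=
  [ffun d => fsum [seq fmul (fdiv (fexp (score u c)) z) (matvec (WV T l) c d) | c <- s]].

Definition attn_col (G : nat -> column) (n : nat) : column :=
  let z := softmax_denom G n in attn_combine (G n) z (attended (G n) z G n).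

Hypothesis fsum_nonzero : forall s : seq M, fsum s = fsum [seq v <- s | v != f0 M].
Hypothesis fmul0 : forall f : M, fmul (f0 M) f = f0 M.

Lemma fsum_nonzero_weights (a b : nat -> M) (s : seq nat) :
  fsum [seq fmul (a m) (b m) | m <- s] = fsum [seq fmul (a m) (b m) | m <- s & a m != f0 M].
Proof.
rewrite fsum_nonzero [RHS]fsum_nonzero; congr fsum.
elim: s => [|m s IH] //=; case: (eqVneq (a m) (f0 M)) => [->|_] /=; last by rewrite IH.
by rewrite fmul0 eqxx.
Qed.

Lemma col_attn (H : nat -> 'I_D -> M) n : col (attn T l H) n = attn_col (col H) n.
Proof.
have score_col m m' : score (col H m) (col H m') =
    fdiv (fsum [seq fmul (matvec (WQ T l) (H m) i) (matvec (WK T l) (H m') i)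
               | i <- enum 'I_(Dk T)]) (fsqrt (fofnat M D)).
  by congr (fdiv (fsum _) _); apply: eq_map => i; rewrite !matvec_ffun.
apply/ffunP => d; rewrite !ffunE /attn fsum_nonzero_weights -map_comp.
have denom_col : softmax_denom (col H) n =
    fsum [seq fexp (fdiv (fsum [seq fmul (matvec (WQ T l) (H n) j) (matvec (WK T l) (H i) j)
                               | j <- enum 'I_(Dk T)]) (fsqrt (fofnat M D))) | i <- iota 1 n.-1].
  by congr fsum; apply: eq_map => i; rewrite /= score_col.
rewrite denom_col; congr fsum.
under [in RHS]eq_filter => m do rewrite score_col.
by apply: eq_map => m /=; rewrite score_col matvec_ffun.
Qed.

End Attention.
End Columns.

Fixpoint seqs_upto (C : finType) (k : nat) : seq (seq C) :=
  if k is k'.+1 then [::] :: [seq c :: s | c <- enum C, s <- seqs_upto C k'] else [:: [::]].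

Lemma mem_seqs_upto (C : finType) k (s : seq C) : size s <= k -> s \in seqs_upto C k.
Proof.
elim: k s => [|k IH] [|c s] //= Hs; rewrite inE.
by apply/orP; right; apply: (allpairs_f (fun c s => c :: s)); rewrite ?mem_enum ?IH.
Qed.

Section TransformerDefinable.
Variables (M : fpmodel) (Sig : finType) (D L : nat) (T : transformer M Sig D L).
Local Notation column := {ffun 'I_D -> M}.
Local Notation word := (seq (option Sig)).

Hypothesis fsum_nonzero : forall s : seq M, fsum s = fsum [seq v <- s | v != f0 M].
Hypothesis fmul0 : forall f : M, fmul (f0 M) f = f0 M.
Hypothesis fexp_nonneg : forall f : M, fnonneg (fexp f).
Variable K : nat.
Hypothesis fsum_counts : forall s t : seq M,
  all (@fnonneg M) s -> all (@fnonneg M) t ->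
  (forall v, minn (count_mem v s) K = minn (count_mem v t) K) -> fsum s = fsum t.
Variable N : nat.
Hypothesis softmax_support : forall s : seq M,
  count (fun v => fdiv (fexp v) (fsum (map (@fexp M) s)) != f0 M) s <= N.

(* The denominator is a sum of nonnegative values, hence determined by how many
   earlier positions take each value, counted up to the threshold [K]. *)
Lemma definable_map_softmax_denom l (G : word -> nat -> column) :
  definable_map G -> definable_map (fun x n => softmax_denom T l (G x) n).
Proof.
move=> HG; apply: (@definable_map_bind _ _ _ G
  (fun u x n => fsum [seq fexp (score T l u (G x i)) | i <- iota 1 n.-1])) => // u.
pose hits v x i := fexp (score T l u (G x i)) == v.
apply: (@definable_map_factor _ _ _
  (fun x n => [ffun v => capped_count (hits v) K x n])).
  apply: definable_map_ffun => v; apply: definable_map_capped_count.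
  exact: (definable_pred (fun c => fexp (score T l u c) == v) HG).
move=> x n x' n' /ffunP E; apply: fsum_counts; rewrite ?all_map;
  try by apply/allP => i _; apply: fexp_nonneg.
move=> v; move/(congr1 val): (E v); rewrite !ffunE /= !inordK ?ltnS ?geq_minr //.
by rewrite !count_map.
Qed.

Lemma size_attended l (G : nat -> column) n :
  size (attended T l (G n) (softmax_denom T l G n) G n) <= N.
Proof.
have := softmax_support [seq score T l (G n) (G i) | i <- iota 1 n.-1].
by rewrite -map_comp count_map /attended size_map size_filter.
Qed.

Lemma definable_map_attn_col l (G : word -> nat -> column) :
  definable_map G -> definable_map (fun x n => attn_col T l (G x) n).
Proof.
move=> HG v.
have Hp (p : column * M) : definable (fun x n =>
    (G x n, softmax_denom T l (G x) n) = p /\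
    (attended T l p.1 p.2 (G x) n \in seqs_upto column N /\
     attn_combine T l p.1 p.2 (attended T l p.1 p.2 (G x) n) = v)).
  apply: definable_and (definable_map_pair HG (definable_map_softmax_denom l HG) p) _.
  apply: (definable_pred_in _ (fun s => attn_combine T l p.1 p.2 s = v)).
  exact: (definable_map_filter (fun c => fdiv (fexp (score T l p.1 c)) p.2 != f0 M) HG).
apply: definable_iff (definable_exists Hp) _ => w n _; split.
  by move=> [p [<- [_ <-]]].
move=> <-; exists (G (wbar w) n, softmax_denom T l (G (wbar w)) n).
by split=> //; split=> //; apply/mem_seqs_upto/size_attended.
Qed.

Lemma definable_map_hstate k : definable_map (fun x n => col (hstate T k x) n).
Proof.
elim: k => [|k IH].
  exact: (definable_map_comp (fun a => [ffun d => emb T a d]) (@definable_map_letter Sig)).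
have sublayer := definable_map_comp2 (@resLN_col M D) _ IH.
case Hk: (odd k).
  apply: (@definable_map_ext _ _
    (fun x n => resLN_col (ffn_col T k./2 (col (hstate T k x) n)) (col (hstate T k x) n))).
    by move=> x n; rewrite /= Hk col_resLN col_ffn.
  exact/sublayer/definable_map_comp.
apply: (@definable_map_ext _ _
  (fun x n => resLN_col (attn_col T k./2 (col (hstate T k x)) n) (col (hstate T k x) n))).
  by move=> x n; rewrite /= Hk col_resLN col_attn.
exact/sublayer/definable_map_attn_col.
Qed.

End TransformerDefinable.

Definition output_col (M : fpmodel) (Sig : finType) (D L : nat) (T : transformer M Sig D L)
    (c : {ffun 'I_D -> M}) : M :=
  fadd (fsum [seq fmul (theta T d) (c d) | d <- enum 'I_D]) (bout T).

Lemma output_colE (M : fpmodel) (Sig : finType) (D L : nat) (T : transformer M Sig D L) x :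
  output T x = output_col T (col (hstate T (2 * L) x) (size x)).
Proof. by congr fadd; congr fsum; apply: eq_map => d; rewrite ffunE. Qed.

Theorem mainTheorem5 (M : fpmodel) (Sig : finType) (D L : nat)
    (T : transformer M Sig D L) :
  fp_axioms M ->
  (forall k, k <= 2 * L -> simulated (hstate T k)) /\
  simulated_scalar (output T) /\
  (exists sigma : pfo (option Sig), sentence sigma /\
     forall w : seq Sig, accepts T w <-> satS (wbar w) sigma).
Proof.
move=> [_ [_ [fexp_nonneg fmul0 fsum_nonzero [K fsum_counts] [N softmax_support]]]].
have Hcol k := definable_map_hstate T fsum_nonzero fmul0 fexp_nonneg fsum_counts
  softmax_support k.
have Hout := definable_map_comp (output_col T) (Hcol (2 * L)).
split; [|split].
- move=> k _ d; suff : definable_map (fun x n => hstate T k x n d) by [].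
  apply: (@definable_map_ext _ _ (fun x n => col (hstate T k x) n d)).
    by move=> x n; rewrite ffunE.
  exact: (definable_map_comp (fun c : {ffun 'I_D -> M} => c d) (Hcol k)).
- move=> f; have [phi [Hphi Hs]] := Hout f; exists phi; split=> // w.
  by rewrite output_colE size_wbar Hs // addn1 /=.
have [sigma [Hsigma Hs]] := definable_at_end (definable_pred (flt (f0 M)) Hout).
by exists sigma; split=> // w; rewrite -Hs /accepts output_colE size_wbar.
Qed.
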